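(* Let $s,t_1,\dots,t_n\in\mathbb{R}^2$ be distinct points, with $T=\{t_1,\dots,t_n\}$ ordered so that $D_{st_1}\le\dots\le D_{st_n}$, and let $P_s=P_r>0$, $N_0>0$, $\alpha\ge 2$. Let $m$ be the midpoint of the segment $[s,t_n]$, and let $C_s$, $C_m$ be the closed disks of radius $D_{st_n}/2$ centered at $s$ and at $m$ respectively. If $T\subseteq C_s\cup C_m$ (and $m\notin T$), then placing the relay at $m$ maximizes the multicast rate $R^*_{sT}(r)$ over all relay positions $r\in\mathbb{R}^2\setminus(\{s\}\cup T)$.
   Context: $D_{uv}$ is Euclidean distance. Achievable low-SNR broadcast-relay hypergraph model: for a relay position $r\notin\{s\}\cup T$, the node set is $\mathcal{N}=\{s,r\}\cup T$. The hyperarcs are $(s,J)$ for nonempty $J\subseteq\{r\}\cup T$ and $(r,J)$ for nonempty $J\subseteq T$. A power allocation assigns $P_{sJ}\ge0$, $P_{rJ}\ge0$ with $\sum_J P_{sJ}\le P_s$ and $\sum_J P_{rJ}\le P_r$; the capacity of hyperarc $(i,J)$ is $c_{iJ}=P_{iJ}/(N_0\max_{j\in J}D_{ij}^{\alpha})$. For a receiver $t\in T$, $R_{st}$ is the minimum, over all $S\subseteq\mathcal{N}$ with $s\in S$, $t\notin S$, of $\sum c_{iJ}$ over hyperarcs with $i\in S$ and $J\not\subseteq S$. The multicast rate is $R_{sT}=\min_{t\in T}R_{st}$, and $R^*_{sT}(r)$ is its maximum over all power allocations. *)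

From Stdlib Require Import Reals.
From mathcomp Require Import all_boot.

Set Implicit Arguments.
Unset Strict Implicit.
Unset Printing Implicit Defensive.

Local Open Scope R_scope.

Definition pt : Type := (R * R)%type.

Definition Ddist (p q : pt) : R :=
  sqrt ((fst p - fst q) ^ 2 + (snd p - snd q) ^ 2).

Definition midpoint (p q : pt) : pt :=
  ((fst p + fst q) / 2, (snd p + snd q) / 2).

(* Nodes of the hypergraph with n receivers:
   None = source s, Some None = relay r, Some (Some i) = receiver t_(i+1). *)
Notation node n := (option (option 'I_n)).

Definition src {n : nat} : node n := None.
Definition rel {n : nat} : node n := Some None.
Definition tgt {n : nat} (i : 'I_n) : node n := Some (Some i).

Definition pos (n : nat) (s r : pt) (t : nat -> pt) (v : node n) : pt :=
  match v with
  | None => s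
  | Some None => r
  | Some (Some i) => t (nat_of_ord i)
  end.

(* Hyperarcs: (s,J) for nonempty J ⊆ {r} ∪ T, and (r,J) for nonempty J ⊆ T. *)
Definition hyperarc (n : nat) (i : node n) (J : {set node n}) : bool :=
  match i with
  | None => (J != set0) && (src \notin J)
  | Some None => [&& J != set0, src \notin J & rel \notin J]
  | Some (Some _) => false
  end.

Definition fsum (T : finType) (P : pred T) (f : T -> R) : R :=
  foldr (fun x acc => f x + acc) 0 (filter P (enum T)).

(* Minimum of a (nonempty) list of reals; 0 on the empty list (never used). *)
Definition minlist (l : seq R) : R :=
  match l with
  | [::] => 0
  | x :: l' => foldr Rmin x l'
  end.

Definition alloc (n : nat) : Type := node n -> {set node n} -> R.

Definition power_ok (n : nat) (Ps Pr : R) (a : alloc n) : Prop :=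
  (forall i J, hyperarc i J -> 0 <= a i J) /\
  fsum (hyperarc src) (a src) <= Ps /\
  fsum (hyperarc rel) (a rel) <= Pr.

Definition max_dist_pow (n : nat) (s r : pt) (t : nat -> pt) (alpha : R)
  (i : node n) (J : {set node n}) : R :=
  foldr (fun j acc => Rmax (Rpower (Ddist (pos s r t i) (pos s r t j)) alpha) acc)
        0 (enum J).

Definition cap (n : nat) (s r : pt) (t : nat -> pt) (N0 alpha : R) (a : alloc n)
  (i : node n) (J : {set node n}) : R :=
  a i J / (N0 * max_dist_pow s r t alpha i J).

Definition cut_value (n : nat) (s r : pt) (t : nat -> pt) (N0 alpha : R)
  (a : alloc n) (C : {set node n}) : R :=
  fsum (fun iJ : node n * {set node n} =>
          [&& iJ.1 \in C, hyperarc iJ.1 iJ.2 & ~~ (iJ.2 \subset C)])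
       (fun iJ => cap s r t N0 alpha a iJ.1 iJ.2).

Definition rate_st (n : nat) (s r : pt) (t : nat -> pt) (N0 alpha : R)
  (a : alloc n) (k : 'I_n) : R :=
  minlist (map (cut_value s r t N0 alpha a)
    (filter (fun C : {set node n} => (src \in C) && (tgt k \notin C))
            (enum [set: {set node n}]))).

Definition multicast_rate (n : nat) (s r : pt) (t : nat -> pt) (N0 alpha : R)
  (a : alloc n) : R :=
  minlist [seq rate_st s r t N0 alpha a k | k <- enum 'I_n].

(* Let rho = D_{s t_n} / 2.  Every relay position is compared with the midpoint
   m of [s, t_n] through the single value Ps / (N0 rho^alpha).

   Upper bound (any relay r, any power allocation).  For a receiver t_k two cuts
   separate s from t_k: the complement of {t_k} and the complement of {t_k, r}.
   Their values are at most p/A + y/B and p/A + q/C, where p (resp. q) is the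
   source power on hyperarcs reaching t_k (resp. reaching r but not t_k), y is
   the relay power on hyperarcs reaching t_k, and A, B, C are N0 times the
   alpha-th powers of D_{s t_k}, D_{r t_k}, D_{s r}.  Optimising over
   p + q <= Ps, y <= Pr bounds the rate by max(Ps, Pr) / (N0 (D_{s t_k}/2)^alpha);
   when D_{sr} < D_{s t_k}/2 this uses the convexity of x |-> x^alpha
   (alpha >= 1) together with the triangle inequality.

   Lower bound (relay at m).  Send all source power on the hyperarc from s to m
   and the receivers within rho of s, and all relay power on the hyperarc from m
   to the other receivers.  Every cut separating s from a receiver cuts one of
   these hyperarcs, whose reach is at most rho, so the rate is at least
   min(Ps, Pr) / (N0 rho^alpha). *)

From HB Require Import structures.
From Pilot Require Import Defs.
From Stdlib Require Import Reals Rgeom Lra.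
From mathcomp Require Import all_boot zify.

Local Open Scope R_scope.

(* Rpower is defined through exp, hence always positive. *)
Lemma Rpower_gt0 x y : 0 < Rpower x y.
Proof. exact: exp_pos. Qed.

(* For alpha >= 1 the increment u |-> (u + a)^alpha - u^alpha is nondecreasing
   (convexity of x^alpha); we compare it at u = d and u = a. *)
Lemma Rpower_increment_mono alpha a d : 1 <= alpha -> 0 < d <= a ->
  Rpower (d + a) alpha - Rpower d alpha <= Rpower (2 * a) alpha - Rpower a alpha.
Proof.
move=> Hal [Hd Hda].
have [->|Hlt] : d = a \/ d < a by lra.
  by replace (a + a) with (2 * a) by ring; lra.
pose g u := Rpower (u + a) alpha - Rpower u alpha.
pose g' u := alpha * Rpower (u + a) (alpha - 1) * 1 - alpha * Rpower u (alpha - 1).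
have [c [Hgc Hc]] : exists c, g a - g d = g' c * (a - d) /\ d < c < a.
  apply: MVT_cor2 => // c Hc; apply: derivable_pt_lim_minus.
    apply: (derivable_pt_lim_comp (fun u => u + a) (Rpower^~ alpha)).
      rewrite -[1]Rplus_0_r.
      exact: derivable_pt_lim_plus (derivable_pt_lim_id c) (derivable_pt_lim_const a c).
    by apply: derivable_pt_lim_power; lra.
  by apply: derivable_pt_lim_power; lra.
have Hg'c : 0 <= g' c.
  have : Rpower c (alpha - 1) <= Rpower (c + a) (alpha - 1) by apply: Rle_Rpower_l; lra.
  rewrite /g'; nra.
rewrite /g in Hgc; replace (2 * a) with (a + a) by ring; nra.
Qed.

(* Key estimate when the relay is close to the source: with d = D_{st},
   c = D_{sr} < d/2 and b = D_{rt} >= d - c,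
   (d/2)^alpha (d^alpha + b^alpha - c^alpha) <= d^alpha b^alpha. *)
Lemma relay_near_source_bound alpha d b c :
  1 <= alpha -> 0 < c -> c < d / 2 -> d - c <= b ->
  Rpower (d / 2) alpha * (Rpower d alpha + Rpower b alpha - Rpower c alpha)
    <= Rpower d alpha * Rpower b alpha.
Proof.
move=> Hal Hc Hcd Hb.
have Hce : 0 < c <= d - c by lra.
have Hinc := Rpower_increment_mono alpha (d - c) c Hal Hce.
replace (c + (d - c)) with d in Hinc by ring.
have Hd2 : Rpower d alpha = Rpower 2 alpha * Rpower (d / 2) alpha.
  by rewrite Rpower_mult_distr; [congr Rpower; field | lra | lra].
have He2 : Rpower (2 * (d - c)) alpha = Rpower 2 alpha * Rpower (d - c) alpha.
  by rewrite Rpower_mult_distr //; lra.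
have H2 : 1 <= Rpower 2 alpha.
  have -> : 1 = Rpower 1 alpha by rewrite /Rpower ln_1 Rmult_0_r exp_0.
  by apply: Rle_Rpower_l; lra.
have Heb : Rpower (d - c) alpha <= Rpower b alpha by apply: Rle_Rpower_l; lra.
have Hd20 := Rpower_gt0 (d / 2) alpha.
rewrite He2 Hd2 in Hinc; rewrite Hd2.
(* d^alpha + b^alpha - c^alpha <= (2^alpha - 1) (d-c)^alpha + b^alpha <= 2^alpha b^alpha *)
have Hsum : Rpower 2 alpha * Rpower (d / 2) alpha + Rpower b alpha - Rpower c alpha
    <= Rpower 2 alpha * Rpower b alpha by nra.
have := Rmult_le_compat_l _ _ _ (Rlt_le _ _ Hd20) Hsum; lra.
Qed.

(* A, B, C are the scaled path losses
   s->t, r->t, s->r and R0 <= A. *)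
Lemma two_cut_bound A B C R0 P p q y :
  0 < A -> 0 < B -> 0 < C -> 0 < R0 -> R0 <= A ->
  (C < R0 -> R0 * (A + B - C) <= A * B) ->
  0 <= p -> 0 <= q -> 0 <= y -> p + q <= P -> y <= P ->
  Rmin (p / A + y / B) (p / A + q / C) <= P / R0.
Proof.
move=> HA HB HC HR HRA HK Hp Hq Hy Hpq HyP.
rewrite /Rdiv.
set a := / A; set b := / B; set c := / C; set r0 := / R0.
have Ha : 0 < a by apply: Rinv_0_lt_compat.
have Hb : 0 < b by apply: Rinv_0_lt_compat.
have Hc : 0 < c by apply: Rinv_0_lt_compat.
have Har : a <= r0 by apply: Rinv_le_contravar.
have [HCR|HCR] := Rle_or_lt R0 C.
  have : c <= r0 by apply: Rinv_le_contravar.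
  by move=> Hcr; apply: Rle_trans (Rmin_r _ _) _; nra.
have Hrc : r0 < c by apply: Rinv_lt_contravar; nra.
(* the reciprocal form of the hypothesis on C < R0 *)
have Habc : a * c + b * c - a * b <= r0 * c.
  have E : a * c + b * c - a * b = R0 * (A + B - C) * (a * b * c * r0).
    by rewrite /a /b /c /r0; field; lra.
  have E' : r0 * c = A * B * (a * b * c * r0).
    by rewrite /a /b /c /r0; field; lra.
  rewrite E E'; apply: Rmult_le_compat_r; last exact: HK.
  by repeat apply: Rmult_le_pos; lra.
(* weight the two cut values by (c - a) and a *)
set X := p * a + y * b; set Y := p * a + q * c.
have Hmix : c * Rmin X Y <= (c - a) * X + a * Y.
  by rewrite /Rmin; case: Rle_dec => Hle; nra.
have HXY : (c - a) * X + a * Y <= P * (a * c + b * c - a * b).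
  have Hy' : (c - a) * b * y <= (c - a) * b * P by apply: Rmult_le_compat_l; nra.
  have Hpq' : a * c * (p + q) <= a * c * P by apply: Rmult_le_compat_l; nra.
  rewrite /X /Y; nra.
nra.
Qed.

Lemma Ddist_euc (x0 y0 x1 y1 : R) : Ddist (x0, y0) (x1, y1) = dist_euc x0 y0 x1 y1.
Proof. by rewrite /Ddist /dist_euc /= !Rsqr_pow2. Qed.

Lemma Ddist_refl p : Ddist p p = 0.
Proof. by case: p => p1 p2; rewrite Ddist_euc distance_refl. Qed.

Lemma Ddist_triangle p q u : Ddist p q <= Ddist p u + Ddist u q.
Proof. by case: p q u => [p1 p2] [q1 q2] [u1 u2]; rewrite !Ddist_euc; apply: triangle. Qed.

Lemma Ddist_gt0 p q : p <> q -> 0 < Ddist p q.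
Proof.
case: p q => [p1 p2] [q1 q2] Hpq; rewrite /Ddist; cbn [fst snd]; apply: sqrt_lt_R0.
have S1 := pow2_ge_0 (p1 - q1); have S2 := pow2_ge_0 (p2 - q2).
have [E1|E1] := Req_dec (p1 - q1) 0.
  have E2 : p2 - q2 <> 0 by move=> E2; apply: Hpq; congr pair; lra.
  by have := Rlt_0_sqr _ E2; rewrite Rsqr_pow2; lra.
by have := Rlt_0_sqr _ E1; rewrite Rsqr_pow2; lra.
Qed.

Lemma Ddist_midpoint s u : Ddist s (midpoint s u) = Ddist s u / 2.
Proof.
case: s u => [s1 s2] [u1 u2]; rewrite /Ddist /midpoint; cbn [fst snd].
set S := (s1 - u1) ^ 2 + (s2 - u2) ^ 2.
have HS : 0 <= S by apply: Rplus_le_le_0_compat; apply: pow2_ge_0.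
rewrite -(sqrt_pow2 (sqrt S / 2)); last by have := sqrt_pos S; lra.
congr sqrt; rewrite (_ : (sqrt S / 2) ^ 2 = sqrt S * sqrt S / 4); last by field.
by rewrite sqrt_sqrt // /S; field.
Qed.

HB.instance Definition _ :=
  Monoid.isComLaw.Build R 0 Rplus (fun a b c => esym (Rplus_assoc a b c)) Rplus_comm Rplus_0_l.

Lemma fsumE (T : finType) (P : pred T) (f : T -> R) :
  fsum P f = \big[Rplus/0]_(x | P x) f x.
Proof.
rewrite /fsum -big_filter.
have -> : [seq x <- index_enum T | P x] = [seq x <- enum T | P x].
  by rewrite enumT /index_enum; unlock.
by elim: [seq x <- enum T | P x] => [|x l IH]; rewrite ?big_nil ?big_cons -?IH.
Qed.

Section Sums.
Variable I : finType.
Implicit Types (P Q : pred I) (F G : I -> R).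

Lemma sum_le P F G : (forall i, P i -> F i <= G i) ->
  \big[Rplus/0]_(i | P i) F i <= \big[Rplus/0]_(i | P i) G i.
Proof. by move=> H; apply: (big_ind2 (fun x y => x <= y)) => *; [lra | lra | apply: H]. Qed.

Lemma sum_ge0 P F : (forall i, P i -> 0 <= F i) -> 0 <= \big[Rplus/0]_(i | P i) F i.
Proof. by move=> H; apply: (big_ind (fun x => 0 <= x)) => *; [lra | lra | apply: H]. Qed.

Lemma sum_sub P Q F : (forall i, P i -> Q i) -> (forall i, Q i -> 0 <= F i) ->
  \big[Rplus/0]_(i | P i) F i <= \big[Rplus/0]_(i | Q i) F i.
Proof.
move=> PQ H; rewrite [X in _ <= X](bigID P) /=.
have -> : \big[Rplus/0]_(i | Q i && P i) F i = \big[Rplus/0]_(i | P i) F i.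
  by apply: eq_bigl => i; case Pi: (P i); rewrite ?andbF ?(PQ _ Pi).
have : 0 <= \big[Rplus/0]_(i | Q i && ~~ P i) F i.
  by apply: sum_ge0 => i /andP [Qi _]; apply: H.
lra.
Qed.

Lemma sum_term P F j : P j -> (forall i, P i -> 0 <= F i) ->
  F j <= \big[Rplus/0]_(i | P i) F i.
Proof.
move=> Pj H; rewrite (bigD1 j) //=.
have : 0 <= \big[Rplus/0]_(i | P i && (i != j)) F i.
  by apply: sum_ge0 => i /andP [Pi _]; apply: H.
lra.
Qed.

Lemma sum_div P F c : c <> 0 ->
  \big[Rplus/0]_(i | P i) (F i / c) = (\big[Rplus/0]_(i | P i) F i) / c.
Proof.
by move=> Hc; apply: (big_ind2 (fun x y => x = y / c)) => [|x1 x2 y1 y2 -> ->|]; try field.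
Qed.

Lemma sum_pick P (x : I) (c : R) :
  \big[Rplus/0]_(i | P i) (if i == x then c else 0) = if P x then c else 0.
Proof.
case Px: (P x).
  rewrite (bigD1 x) // eqxx big1 /=; first ring.
  by move=> i /andP [_ /negbTE ->].
by rewrite big1 // => i Pi; case: eqP => // E; rewrite E Px in Pi.
Qed.
End Sums.

Lemma minlist_le (T : eqType) (f : T -> R) (s : seq T) y : y \in s ->
  minlist (map f s) <= f y.
Proof.
case: s => [//|z s] /=.
have aux x : foldr Rmin x (map f s) <= x /\
    forall y, y \in s -> foldr Rmin x (map f s) <= f y.
  elim: s => [|w s [IH1 IH2]] /=; first by split; [lra|].
  split; first exact: Rle_trans (Rmin_r _ _) IH1.
  move=> v; rewrite in_cons => /orP [/eqP ->|vs]; first exact: Rmin_l.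
  exact: Rle_trans (Rmin_r _ _) (IH2 _ vs).
by rewrite in_cons => /orP [/eqP ->|ys]; have [H1 H2] := aux (f z); [|apply: H2].
Qed.

Lemma minlist_ge (T : eqType) (f : T -> R) (s : seq T) V : s != [::] ->
  (forall y, y \in s -> V <= f y) -> V <= minlist (map f s).
Proof.
case: s => [//|z s] _ /= H.
have : V <= f z by apply: H; rewrite in_cons eqxx.
elim: s H => [|w s IH] H Hz //=.
apply: Rmin_glb; first by apply: H; rewrite !in_cons eqxx orbT.
by apply: IH => // y; rewrite in_cons => /orP [/eqP ->|ys]; apply: H;
  rewrite !in_cons ?eqxx ?ys ?orbT.
Qed.

Lemma foldmax_ge (T : eqType) (f : T -> R) l j : j \in l ->
  f j <= foldr (fun j acc => Rmax (f j) acc) 0 l.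
Proof.
elim: l => [//|x l IH] /=; rewrite in_cons => /orP [/eqP ->|H]; first exact: Rmax_l.
exact: Rle_trans (IH H) (Rmax_r _ _).
Qed.

Lemma foldmax_le (T : eqType) (f : T -> R) l M : 0 <= M ->
  (forall j, j \in l -> f j <= M) -> foldr (fun j acc => Rmax (f j) acc) 0 l <= M.
Proof.
move=> HM; elim: l => [//|x l IH] /= H.
apply: Rmax_lub; first by apply: H; rewrite in_cons eqxx.
by apply: IH => j jl; apply: H; rewrite in_cons jl orbT.
Qed.

Section Hypergraph.
Variables (n : nat) (s r : pt) (t : nat -> pt) (N0 alpha : R).
Hypothesis N0_gt0 : 0 < N0.

Local Notation loss i j := (Rpower (Ddist (Defs.pos s r t i) (Defs.pos s r t j)) alpha).

Definition alloc_ge0 (a : alloc n) : Prop := forall i J, hyperarc i J -> 0 <= a i J.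

Lemma max_dist_pow_ge (i : node n) (J : {set node n}) j : j \in J ->
  loss i j <= max_dist_pow s r t alpha i J.
Proof. by move=> jJ; apply: (foldmax_ge _ (fun j => loss i j)); rewrite mem_enum. Qed.

Lemma max_dist_pow_le (i : node n) (J : {set node n}) M : 0 <= M ->
  (forall j, j \in J -> loss i j <= M) -> max_dist_pow s r t alpha i J <= M.
Proof. by move=> HM H; apply: foldmax_le => // j; rewrite mem_enum; apply: H. Qed.

Lemma max_dist_pow_gt0 (i : node n) (J : {set node n}) : J != set0 ->
  0 < max_dist_pow s r t alpha i J.
Proof.
case/set0Pn => j jJ.
exact: Rlt_le_trans (Rpower_gt0 _ _) (max_dist_pow_ge i _ _ jJ).
Qed.

Lemma hyperarc_neq0 (i : node n) (J : {set node n}) : hyperarc i J -> J != set0.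
Proof. by case: i => [[k|]|] //= /andP []. Qed.

Lemma cap_ge0 (a : alloc n) (i : node n) (J : {set node n}) :
  alloc_ge0 a -> hyperarc i J -> 0 <= cap s r t N0 alpha a i J.
Proof.
move=> Ha hJ; have Hm := max_dist_pow_gt0 i _ (hyperarc_neq0 _ _ hJ).
rewrite /cap; apply: Rmult_le_pos; first exact: Ha.
by apply/Rlt_le/Rinv_0_lt_compat/Rmult_lt_0_compat.
Qed.

Lemma cap_le (a : alloc n) (i : node n) (J : {set node n}) j :
  alloc_ge0 a -> hyperarc i J -> j \in J ->
  cap s r t N0 alpha a i J <= a i J / (N0 * loss i j).
Proof.
move=> Ha hJ jJ; have H1 := max_dist_pow_ge i _ _ jJ.
have H0 := Rpower_gt0 (Ddist (Defs.pos s r t i) (Defs.pos s r t j)) alpha.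
rewrite /cap; apply: Rmult_le_compat_l; first exact: Ha.
apply: Rinv_le_contravar; first exact: Rmult_lt_0_compat.
by apply: Rmult_le_compat_l; lra.
Qed.

Lemma cap_within_reach (a : alloc n) (i : node n) (J : {set node n}) rho :
  0 <= alpha -> 0 <= a i J -> J != set0 ->
  (forall j, j \in J -> 0 < Ddist (Defs.pos s r t i) (Defs.pos s r t j) <= rho) ->
  a i J / (N0 * Rpower rho alpha) <= cap s r t N0 alpha a i J.
Proof.
move=> Hal Ha HJ Hreach.
have H1 : max_dist_pow s r t alpha i J <= Rpower rho alpha.
  by apply: max_dist_pow_le => [|j /Hreach]; [exact/Rlt_le/Rpower_gt0 | apply: Rle_Rpower_l].
have H0 := max_dist_pow_gt0 i J HJ.
rewrite /cap; apply: Rmult_le_compat_l => //.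
apply: Rinv_le_contravar; first exact: Rmult_lt_0_compat.
by apply: Rmult_le_compat_l; lra.
Qed.

Lemma sum_cap_le (a : alloc n) (i : node n) (P : pred {set node n}) (j : node n) :
  alloc_ge0 a -> (forall J, P J -> hyperarc i J /\ j \in J) ->
  \big[Rplus/0]_(J | P J) cap s r t N0 alpha a i J <=
  (\big[Rplus/0]_(J | P J) a i J) / (N0 * loss i j).
Proof.
move=> Ha H; rewrite -sum_div; last exact/Rgt_not_eq/Rmult_lt_0_compat/Rpower_gt0.
by apply: sum_le => J /H [hJ jJ]; apply: cap_le.
Qed.

Lemma cut_value_split (a : alloc n) (C : {set node n}) :
  cut_value s r t N0 alpha a C =
  (if src \in C then \big[Rplus/0]_(J | hyperarc src J && ~~ (J \subset C))
                       cap s r t N0 alpha a src J else 0)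
  + (if Defs.rel \in C then \big[Rplus/0]_(J | hyperarc Defs.rel J && ~~ (J \subset C))
                            cap s r t N0 alpha a Defs.rel J else 0).
Proof.
rewrite /cut_value fsumE -(pair_big_dep (fun i => i \in C)
  (fun i J => hyperarc i J && ~~ (J \subset C)) (fun i J => cap s r t N0 alpha a i J)).
rewrite big_mkcond (bigD1 src) // (bigD1 Defs.rel) //= [X in _ + (_ + X) = _]big1; first ring.
by move=> [[k|]|] //= _; case: ifP => // _; rewrite big1 // => J /andP [].
Qed.

Lemma cap_le_cut_value (a : alloc n) (C : {set node n}) (i : node n) (J : {set node n}) :
  alloc_ge0 a -> i \in C -> hyperarc i J -> ~~ (J \subset C) ->
  cap s r t N0 alpha a i J <= cut_value s r t N0 alpha a C.
Proof.
move=> Ha iC hJ JC; rewrite /cut_value fsumE.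
apply: (sum_term _ _ (fun iJ : node n * {set node n} => cap s r t N0 alpha a iJ.1 iJ.2) (i, J)).
  by rewrite /= iC hJ JC.
by move=> [i' J'] /and3P [_ h _]; apply: cap_ge0.
Qed.

Lemma rate_le_cut (a : alloc n) (k : 'I_n) (C : {set node n}) :
  src \in C -> tgt k \notin C ->
  multicast_rate s r t N0 alpha a <= cut_value s r t N0 alpha a C.
Proof.
move=> sC tC; have Hk : k \in enum 'I_n by rewrite mem_enum.
apply: Rle_trans (minlist_le _ (rate_st s r t N0 alpha a) _ _ Hk) _.
by apply: minlist_le; rewrite mem_filter mem_enum in_setT sC tC.
Qed.

Lemma rate_ge_cuts (a : alloc n) V : (0 < n)%nat ->
  (forall (k : 'I_n) (C : {set node n}), src \in C -> tgt k \notin C ->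
     V <= cut_value s r t N0 alpha a C) ->
  V <= multicast_rate s r t N0 alpha a.
Proof.
move=> Hn H; apply: minlist_ge => [|k _].
  by rewrite -size_eq0 size_enum_ord; apply/eqP; lia.
apply: minlist_ge => [|C].
  apply/eqP => /(congr1 (fun l => [set src] \in l)).
  by rewrite mem_filter mem_enum in_setT !inE eqxx.
by rewrite mem_filter => /andP [/andP [sC tC] _]; apply: H tC.
Qed.

End Hypergraph.

Lemma subset_setC1 (T : finType) (x : T) (J : {set T}) :
  (J \subset ~: [set x]) = (x \notin J).
Proof. by rewrite -disjoints_subset disjoint_sym disjoints1. Qed.

Lemma subset_setC2 (T : finType) (x y : T) (J : {set T}) :
  (J \subset ~: [set x; y]) = (x \notin J) && (y \notin J).
Proof.
apply/subsetP/andP => [sub | [nx ny] v vJ].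
  by split; apply/negP => /sub; rewrite !inE eqxx ?orbT.
by rewrite !inE negb_or; apply/andP; split; [apply: contraNneq nx | apply: contraNneq ny] => <-.
Qed.

Section TwoCuts.
Variables (n : nat) (s r : pt) (t : nat -> pt) (N0 alpha : R) (a : alloc n) (k : 'I_n).

Local Notation capa := (cap s r t N0 alpha a).

Lemma cut_receiver_value :
  cut_value s r t N0 alpha a (~: [set tgt k]) =
  \big[Rplus/0]_(J | hyperarc src J && (tgt k \in J)) capa src J
  + \big[Rplus/0]_(J | hyperarc Defs.rel J && (tgt k \in J)) capa Defs.rel J.
Proof.
rewrite cut_value_split !inE /=.
by congr Rplus; apply: eq_bigl => J; rewrite subset_setC1 negbK.
Qed.

Lemma cut_receiver_relay_value :
  cut_value s r t N0 alpha a (~: [set tgt k; Defs.rel]) =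
  \big[Rplus/0]_(J | hyperarc src J && (tgt k \in J)) capa src J
  + \big[Rplus/0]_(J | hyperarc src J && (Defs.rel \in J) && (tgt k \notin J)) capa src J.
Proof.
rewrite cut_value_split !inE /= Rplus_0_r (bigID (fun J : {set node n} => tgt k \in J)) /=.
congr Rplus; apply: eq_bigl => J; rewrite subset_setC2 negb_and !negbK;
  by case: (tgt k \in J); rewrite ?andbT ?andbF ?orbF.
Qed.

End TwoCuts.

Lemma rate_le_two_cuts (n : nat) (s r : pt) (t : nat -> pt) (N0 alpha Ps Pr : R)
    (a : alloc n) (k : 'I_n) :
  0 < N0 -> power_ok Ps Pr a ->
  exists p q y, 0 <= p /\ 0 <= q /\ 0 <= y /\ p + q <= Ps /\ y <= Pr /\
    multicast_rate s r t N0 alpha a <=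
    Rmin (p / (N0 * Rpower (Ddist s (t k)) alpha) + y / (N0 * Rpower (Ddist r (t k)) alpha))
         (p / (N0 * Rpower (Ddist s (t k)) alpha) + q / (N0 * Rpower (Ddist s r) alpha)).
Proof.
move=> HN0 [Ha [HPs HPr]]; rewrite !fsumE in HPs HPr.
set p := \big[Rplus/0]_(J | hyperarc src J && (tgt k \in J)) a src J.
set q := \big[Rplus/0]_(J | hyperarc src J && (Defs.rel \in J) && (tgt k \notin J)) a src J.
set y := \big[Rplus/0]_(J | hyperarc Defs.rel J && (tgt k \in J)) a Defs.rel J.
have sum_a_ge0 i (P : pred {set node n}) : (forall J, P J -> hyperarc i J) ->
    0 <= \big[Rplus/0]_(J | P J) a i J.
  by move=> HP; apply: sum_ge0 => J /HP; apply: Ha.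
exists p, q, y; split; [|split; [|split; [|split; [|split]]]].
- by apply: sum_a_ge0 => J /andP [].
- by apply: sum_a_ge0 => J /andP [/andP []].
- by apply: sum_a_ge0 => J /andP [].
- apply: Rle_trans HPs; rewrite [X in _ <= X](bigID (fun J : {set node n} => tgt k \in J)) /=.
  apply: Rplus_le_compat_l; apply: sum_sub => [J /andP [/andP [h _] nt]|J /andP [h _]].
    by apply/andP; split.
  exact: Ha.
- by apply: Rle_trans HPr; apply: sum_sub => [J /andP [] //|J h]; apply: Ha.
have Hsrc : src \in ~: [set tgt k] /\ src \in ~: [set tgt k; Defs.rel] by rewrite !inE.
have Htgt : tgt k \notin ~: [set tgt k] /\ tgt k \notin ~: [set tgt k; Defs.rel].
  by rewrite !inE eqxx.
apply: Rmin_glb.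
- apply: Rle_trans (rate_le_cut _ _ _ _ _ _ _ _ _ Hsrc.1 Htgt.1) _.
  rewrite cut_receiver_value; apply: Rplus_le_compat.
    by apply: (sum_cap_le _ _ _ _ _ _ HN0 a src _ (tgt k) Ha) => J /andP [].
  by apply: (sum_cap_le _ _ _ _ _ _ HN0 a Defs.rel _ (tgt k) Ha) => J /andP [].
- apply: Rle_trans (rate_le_cut _ _ _ _ _ _ _ _ _ Hsrc.2 Htgt.2) _.
  rewrite cut_receiver_relay_value; apply: Rplus_le_compat.
    by apply: (sum_cap_le _ _ _ _ _ _ HN0 a src _ (tgt k) Ha) => J /andP [].
  by apply: (sum_cap_le _ _ _ _ _ _ HN0 a src _ Defs.rel Ha) => J /andP [/andP []].
Qed.

Lemma rate_upper_bound (n : nat) (s r : pt) (t : nat -> pt) (N0 alpha Ps Pr : R)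
    (a : alloc n) (k : 'I_n) :
  0 < N0 -> 1 <= alpha -> r <> s -> t k <> s -> power_ok Ps Pr a ->
  multicast_rate s r t N0 alpha a <= Rmax Ps Pr / (N0 * Rpower (Ddist s (t k) / 2) alpha).
Proof.
move=> HN0 Hal Hrs Hks Hok.
have [p [q [y [Hp [Hq [Hy [Hpq [HyP Hrate]]]]]]]] :=
  rate_le_two_cuts n s r t N0 alpha Ps Pr a k HN0 Hok.
set d := Ddist s (t k); set b := Ddist r (t k); set c := Ddist s r.
have Hd : 0 < d by apply: Ddist_gt0 => E; apply: Hks.
have Hc : 0 < c by apply: Ddist_gt0 => E; apply: Hrs.
have Hloss x : 0 < N0 * Rpower x alpha by apply: Rmult_lt_0_compat; [|apply: Rpower_gt0].
have Hrad : N0 * Rpower (d / 2) alpha <= N0 * Rpower d alpha.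
  by apply: Rmult_le_compat_l; [lra | apply: Rle_Rpower_l; lra].
(* a relay closer to s than d/2 still satisfies the hypothesis of two_cut_bound *)
have Hnear : N0 * Rpower c alpha < N0 * Rpower (d / 2) alpha ->
    N0 * Rpower (d / 2) alpha * (N0 * Rpower d alpha + N0 * Rpower b alpha - N0 * Rpower c alpha)
    <= N0 * Rpower d alpha * (N0 * Rpower b alpha).
  move=> Hcr; have Hcd : c < d / 2.
    apply: Rnot_le_lt => Hdc.
    have : Rpower (d / 2) alpha <= Rpower c alpha by apply: Rle_Rpower_l; lra.
    nra.
  have Htri : d - c <= b by have := Ddist_triangle s (t k) r; rewrite -/d -/b -/c; lra.
  have := relay_near_source_bound alpha d b c Hal Hc Hcd Htri.
  have HN2 : 0 < N0 * N0 by nra.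
  nra.
apply: Rle_trans Hrate _.
apply: (two_cut_bound _ _ _ _ _ _ _ _ (Hloss _) (Hloss _) (Hloss _) (Hloss _) Hrad Hnear Hp Hq Hy).
  exact: Rle_trans Hpq (Rmax_l _ _).
exact: Rle_trans HyP (Rmax_r _ _).
Qed.

Definition two_hyperarc_alloc {n : nat} (Ps Pr : R) (J1 J2 : {set node n}) : alloc n :=
  fun i J => match i with
  | None => if J == J1 then Ps else 0
  | Some None => if J == J2 then Pr else 0
  | Some (Some _) => 0
  end.

Lemma two_hyperarc_alloc_ok (n : nat) (Ps Pr : R) (J1 J2 : {set node n}) :
  0 <= Ps -> 0 <= Pr -> power_ok Ps Pr (two_hyperarc_alloc Ps Pr J1 J2).
Proof.
move=> HPs HPr; split; first by move=> [[i|]|] J _ /=; try case: eqP; lra.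
by split; rewrite fsumE /= sum_pick; case: ifP => _; lra.
Qed.

Lemma relay_within_reach_rate (n : nat) (s q : pt) (t : nat -> pt)
    (N0 alpha Ps Pr rho : R) :
  (0 < n)%nat -> 0 <= Ps -> 0 <= Pr -> 0 < N0 -> 0 <= alpha ->
  q <> s -> Ddist s q <= rho ->
  (forall i, (i < n)%nat -> t i <> s) -> (forall i, (i < n)%nat -> t i <> q) ->
  (forall i, (i < n)%nat -> Ddist s (t i) <= rho \/ Ddist q (t i) <= rho) ->
  exists a : alloc n, power_ok Ps Pr a /\
    Rmin Ps Pr / (N0 * Rpower rho alpha) <= multicast_rate s q t N0 alpha a.
Proof.
move=> Hn HPs HPr HN0 Hal Hqs Hsq Hts Htq Hcov.
pose near (i : 'I_n) : bool := if Rle_dec (Ddist s (t i)) rho then true else false.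
pose J1 : {set node n} :=
  [set v | match v with Some (Some i) => near i | Some None => true | None => false end].
pose J2 : {set node n} := [set v | if v is Some (Some i) then ~~ near i else false].
pose a := two_hyperarc_alloc Ps Pr J1 J2.
have Hok : power_ok Ps Pr a by apply: two_hyperarc_alloc_ok.
exists a; split => //.
have Hdiv P : Rmin Ps Pr <= P ->
    Rmin Ps Pr / (N0 * Rpower rho alpha) <= P / (N0 * Rpower rho alpha).
  move=> HP; apply: Rmult_le_compat_r HP.
  by apply/Rlt_le/Rinv_0_lt_compat/Rmult_lt_0_compat; [|apply: Rpower_gt0].
have Hcap1 : Ps / (N0 * Rpower rho alpha) <= cap s q t N0 alpha a src J1.
  have -> : Ps = a src J1 by rewrite /a /= eqxx.
  apply: (cap_within_reach _ _ _ _ _ _ HN0 a src J1 rho Hal).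
  - by rewrite /a /= eqxx.
  - by apply/set0Pn; exists Defs.rel; rewrite inE.
  move=> [[i|]|]; rewrite inE //= => Hi; split.
  - by apply: Ddist_gt0 => E; apply: (Hts _ (ltn_ord i)).
  - by move: Hi; rewrite /near; case: Rle_dec.
  - exact: Ddist_gt0 (not_eq_sym Hqs).
  - exact: Hsq.
have Hcap2 : J2 != set0 -> Pr / (N0 * Rpower rho alpha) <= cap s q t N0 alpha a Defs.rel J2.
  move=> HJ2; have -> : Pr = a Defs.rel J2 by rewrite /a /= eqxx.
  apply: (cap_within_reach _ _ _ _ _ _ HN0 a Defs.rel J2 rho Hal _ HJ2).
    by rewrite /a /= eqxx.
  move=> [[i|]|]; rewrite inE //= => Hi; split.
    by apply: Ddist_gt0 => E; apply: (Htq _ (ltn_ord i)).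
  case: (Hcov _ (ltn_ord i)) => // Hle.
  by move: Hi; rewrite /near; case: Rle_dec.
apply: rate_ge_cuts => // k C sC tC.
have [J1C | J1C] := boolP (J1 \subset C).
- (* q is on the source side, and t_k is a far receiver cut from q *)
  have rC : Defs.rel \in C by apply: (subsetP J1C); rewrite inE.
  have tJ2 : tgt k \in J2.
    rewrite inE /=; apply/negP => Hk; move: tC; rewrite (subsetP J1C) //.
    by rewrite inE.
  have hJ2 : hyperarc Defs.rel J2.
    by rewrite /= !inE /= andbT; apply/set0Pn; exists (tgt k).
  have J2C : ~~ (J2 \subset C) by apply/subsetPn; exists (tgt k).
  apply: Rle_trans (cap_le_cut_value _ _ _ _ _ _ HN0 a C _ _ (proj1 Hok) rC hJ2 J2C).
  apply: Rle_trans (Hcap2 _); last by apply/set0Pn; exists (tgt k).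
  exact/Hdiv/Rmin_r.
-
  have hJ1 : hyperarc src J1.
    by rewrite /= !inE /= andbT; apply/set0Pn; exists Defs.rel; rewrite inE.
  apply: Rle_trans (cap_le_cut_value _ _ _ _ _ _ HN0 a C _ _ (proj1 Hok) sC hJ1 J1C).
  exact: Rle_trans (Hdiv _ (Rmin_l _ _)) Hcap1.
Qed.
(* With Ps = Pr the upper bound for t_n at any relay position equals the rate
   achieved at the midpoint m, whose reach is rho = D_{s t_n} / 2. *)
Theorem lemma3 (n : nat) (s : pt) (t : nat -> pt) (Ps Pr N0 alpha : R) :
  (0 < n)%nat ->
  (forall i, (i < n)%nat -> t i <> s) ->
  (forall i j, (i < n)%nat -> (j < n)%nat -> i <> j -> t i <> t j) ->
  (forall i j, (i <= j)%nat -> (j < n)%nat -> Ddist s (t i) <= Ddist s (t j)) ->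
  Ps = Pr -> 0 < Ps -> 0 < N0 -> 2 <= alpha ->
  let m := midpoint s (t (n - 1)%nat) in
  let rad := Ddist s (t (n - 1)%nat) / 2 in
  (forall i, (i < n)%nat -> Ddist s (t i) <= rad \/ Ddist m (t i) <= rad) ->
  (forall i, (i < n)%nat -> t i <> m) ->
  forall r : pt, r <> s -> (forall i, (i < n)%nat -> t i <> r) ->
  forall a : alloc n, power_ok Ps Pr a ->
  exists a' : alloc n, power_ok Ps Pr a' /\
    multicast_rate s r t N0 alpha a <= multicast_rate s m t N0 alpha a'.
Proof.
move=> Hn Hts _ _ <- HP HN0 Hal m rad Hcov Htm r Hrs _ a Hok.
have Hlast : (n - 1 < n)%nat by lia.
have Hsm : Ddist s m = rad by rewrite Ddist_midpoint.
have Hrad : 0 < rad.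
  by have := Ddist_gt0 s _ (not_eq_sym (Hts _ Hlast)); rewrite /rad; lra.
have Hms : m <> s by move=> E; move: Hsm; rewrite E Ddist_refl; lra.
have [a' [Hok' Hlow]] := relay_within_reach_rate n s m t N0 alpha Ps Ps rad Hn
  (Rlt_le _ _ HP) (Rlt_le _ _ HP) HN0 ltac:(lra) Hms (Req_le _ _ Hsm) Hts Htm Hcov.
exists a'; split => //.
have Hup := rate_upper_bound n s r t N0 alpha Ps Ps a (Ordinal Hlast) HN0 ltac:(lra) Hrs
  (Hts _ Hlast) Hok.
rewrite Rmax_left in Hup; last exact: Rle_refl.
rewrite Rmin_left in Hlow; last exact: Rle_refl.
exact: Rle_trans Hup Hlow.
Qed.
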